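(* Fix $\lambda\in[0,1)$ and a feasible path flow vector $f$, and let $Z(f,\xi)$ be an integrable random cost. For $\alpha\in(\lambda,1)$ define $$\bar\lambda(\alpha,\lambda)=\frac{\alpha-\lambda}{1+\alpha-2\lambda},\qquad \Phi_{\alpha,\lambda}(f)=\big(1-\bar\lambda(\alpha,\lambda)\big)\mathbb{E}[Z(f,\xi)]+\bar\lambda(\alpha,\lambda)\operatorname{CVaR}_\alpha(Z(f,\xi)).$$ Then $\alpha\mapsto\Phi_{\alpha,\lambda}(f)$ is non-decreasing on $(\lambda,1)$.
   Context: $\operatorname{CVaR}_\alpha(Y):=\inf_{\gamma\in\mathbb{R}}\{\gamma+\frac{1}{1-\alpha}\mathbb{E}[(Y-\gamma)_+]\}$. In the paper $Z(f,\xi)$ is the random TSUE system potential at path flows $f$; the case $\lambda<\alpha$ corresponds to a risk-averse traveler. *)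

From HB Require Import structures.
From mathcomp Require Import all_boot all_order all_algebra.
From mathcomp Require Import all_classical all_reals all_analysis.
Set Implicit Arguments. Unset Strict Implicit. Unset Printing Implicit Defensive.
Import Order.TTheory GRing.Theory Num.Theory.
Local Open Scope classical_set_scope.
Local Open Scope ring_scope.

Definition CVaR d (T : measurableType d) (R : realType) (P : probability T R)
    (alpha : R) (Y : T -> R) : \bar R :=
  ereal_inf [set (g%:E + ((1 - alpha)^-1)%:E *
                  'E_P[fun w => (Num.max (Y w - g) 0)%R])%E | g in [set: R]].

Definition lambda_bar (R : realType) (alpha lambda : R) : R :=
  (alpha - lambda) / (1 + alpha - 2 * lambda).

Definition Phi d (T : measurableType d) (R : realType) (P : probability T R)
    (alpha lambda : R) (Y : T -> R) : \bar R :=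
  ((1 - lambda_bar alpha lambda)%:E * 'E_P[Y]
   + (lambda_bar alpha lambda)%:E * CVaR P alpha Y)%E.

From HB Require Import structures.
From mathcomp Require Import all_boot all_order all_algebra.
From mathcomp Require Import all_classical all_reals all_analysis.
From mathcomp Require Import lra.
Set Implicit Arguments. Unset Strict Implicit. Unset Printing Implicit Defensive.
Import Order.TTheory GRing.Theory Num.Theory.
Local Open Scope classical_set_scope.
Local Open Scope ring_scope.

(* Phi = E[Y] + lambda_bar (CVaR_alpha(Y) - E[Y]), and both factors of the
   product are nonnegative and non-decreasing in alpha: lambda_bar has
   derivative (1 - lambda) / (1 + alpha - 2 lambda)^2, and CVaR_alpha(Y) is an
   infimum of g + E[(Y - g)_+] / (1 - alpha), each term of which is at least
   E[Y] and grows with alpha. *)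

Section cvar.
Context d (T : measurableType d) (R : realType) (P : probability T R) (Y : T -> R).
Hypothesis intY : P.-integrable [set: T] (EFin \o Y).

Local Notation excess g := (fun w => Num.max (Y w - g) 0).

Lemma integrable_shift g : P.-integrable [set: T] (EFin \o (fun w => Y w - g)).
Proof.
have := integrableB measurableT intY (finite_measure_integrable_cst P g measurableT).
by apply: eq_integrable => // w _; rewrite EFinB.
Qed.

Lemma integrable_excess g : P.-integrable [set: T] (EFin \o excess g).
Proof.
have := integrable_funepos measurableT (integrable_shift g).
by apply: eq_integrable => // w _; rewrite funeposE /= EFin_max.
Qed.

Lemma expectation_excess_ge g : ('E_P[Y] - g%:E <= 'E_P[excess g])%E.
Proof.
have Y1 : Y \in Lfun P 1 by apply/Lfun1_integrable.
rewrite -(expectation_cst P g) -expectationB ?Lfun_cst // unlock.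
apply: le_integral => //; [exact: integrable_shift | exact: integrable_excess |].
by move=> w _; rewrite lee_fin le_max lexx.
Qed.

Let mean := fine 'E_P[Y]%E.
Let mean_excess g := fine 'E_P[excess g]%E.

Let meanE : ('E_P[Y] = mean%:E)%E.
Proof. by rewrite fineK // unlock integrable_fin_num. Qed.

Let mean_excessE g : ('E_P[excess g] = (mean_excess g)%:E)%E.
Proof. by rewrite fineK // unlock integrable_fin_num //; exact: integrable_excess. Qed.

Let mean_excess_ge0 g : 0 <= mean_excess g.
Proof.
by rewrite -lee_fin -mean_excessE expectation_ge0 // => w; rewrite le_max lexx orbT.
Qed.

Let mean_excess_ge g : mean - g <= mean_excess g.
Proof. by rewrite -lee_fin EFinB -meanE -mean_excessE expectation_excess_ge. Qed.

Let CVaRE a :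
  CVaR P a Y = ereal_inf [set (g + (1 - a)^-1 * mean_excess g)%:E | g in [set: R]].
Proof.
by rewrite /CVaR; congr ereal_inf; apply: eq_imagel => g _; rewrite mean_excessE.
Qed.

Lemma expectation_le_CVaR a : 0 <= a -> a < 1 -> ('E_P[Y] <= CVaR P a Y)%E.
Proof.
move=> a0 a1; rewrite CVaRE meanE; apply/ereal_infP => _ [g _ <-].
have : 1 <= (1 - a)^-1 by rewrite invf_ge1 ?subr_gt0 //; lra.
have := mean_excess_ge g; have := mean_excess_ge0 g.
rewrite lee_fin; nra.
Qed.

Lemma le_CVaR a b : a <= b -> b < 1 -> (CVaR P a Y <= CVaR P b Y)%E.
Proof.
move=> ab b1; rewrite !CVaRE; apply/ereal_infP => _ [g _ <-].
apply: (@le_trans _ _ (g + (1 - a)^-1 * mean_excess g)%:E).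
  by apply: ereal_inf_lbound; exists g.
rewrite lee_fin lerD2l ler_wpM2r // lef_pV2 ?posrE; lra.
Qed.

Lemma CVaR_fin_num a : 0 <= a -> a < 1 -> (CVaR P a Y \is a fin_num)%E.
Proof.
move=> a0 a1.
have ub : (CVaR P a Y <= (0 + (1 - a)^-1 * mean_excess 0)%:E)%E.
  by rewrite CVaRE; apply: ereal_inf_lbound; exists 0.
have := expectation_le_CVaR a0 a1.
by rewrite meanE; move: ub; case: (CVaR P a Y).
Qed.

End cvar.

Lemma lambda_bar_ge0 (R : realType) (alpha lambda : R) :
  lambda < 1 -> lambda <= alpha -> 0 <= lambda_bar alpha lambda.
Proof. by move=> l1 la; apply: divr_ge0; lra. Qed.

Lemma le_lambda_bar (R : realType) (lambda a b : R) :
  lambda < 1 -> lambda <= a -> a <= b -> lambda_bar a lambda <= lambda_bar b lambda.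
Proof.
move=> l1 la ab.
have Da : 0 < 1 + a - 2 * lambda by lra.
have Db : 0 < 1 + b - 2 * lambda by lra.
rewrite /lambda_bar ler_pdivrMr // mulrAC ler_pdivlMr //; nra.
Qed.

Lemma le_convex_comb (R : realFieldType) (m c1 c2 t1 t2 : R) :
  0 <= t1 -> t1 <= t2 -> m <= c1 -> c1 <= c2 ->
  (1 - t1) * m + t1 * c1 <= (1 - t2) * m + t2 * c2.
Proof.
move=> t1_ge0 t12 mc1 c12; have t2_ge0 : 0 <= t2 by lra.
nra.
Qed.

Theorem proposition5 (d : measure_display) (T : measurableType d) (R : realType)
    (P : probability T R)
    (Flow : Type) (feasible : Flow -> Prop) (Z : Flow -> T -> R) (f : Flow)
    (lambda : R) :
  0 <= lambda -> lambda < 1 ->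
  feasible f ->
  measurable_fun [set: T] (Z f) ->
  P.-integrable [set: T] (EFin \o Z f) ->
  forall alpha1 alpha2 : R,
    lambda < alpha1 -> alpha1 <= alpha2 -> alpha2 < 1 ->
    (Phi P alpha1 lambda (Z f) <= Phi P alpha2 lambda (Z f))%E.
Proof.
move=> l0 l1 _ _ intZ a1 a2 la1 a12 a21.
have a1_ge0 : 0 <= a1 by lra.
have a1_lt1 : a1 < 1 by lra.
have EZ : ('E_P[Z f] \is a fin_num)%E by rewrite unlock integrable_fin_num.
have C1 := CVaR_fin_num intZ a1_ge0 a1_lt1.
have C2 := CVaR_fin_num intZ (le_trans a1_ge0 a12) a21.
rewrite /Phi -(fineK EZ) -(fineK C1) -(fineK C2) -!EFinM -!EFinD lee_fin.
apply: le_convex_comb.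
- by apply: lambda_bar_ge0; lra.
- by apply: le_lambda_bar; lra.
- by apply: fine_le => //; exact: expectation_le_CVaR.
- by apply: fine_le => //; exact: le_CVaR.
Qed.
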